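(* At any time during the execution of DASH (described in the context) on an initially connected graph, every surviving node $v$ satisfies $\mathrm{rem}(v)\ge 2^{\delta(v)/2}$.
   Context: Model: a network is an undirected graph, initially a connected graph $G_0$ on $n$ nodes. In each round an adversary deletes one surviving node $v$ with its incident edges, and then DASH adds edges. $G$ is the current network; $E'$ is the set of healing edges added so far whose endpoints both survive; $G'=(V(G),E')$. $N(u,G)$, $N(u,G')$ are neighbor sets in $G$, $G'$; $\delta(u)=\deg_G(u)-\deg_{G_0}(u)$ is the degree increase of $u$ relative to its initial degree. DASH: initially every node receives an ID drawn independently and uniformly from $[0,1]$ (its initial ID). When $v$ is deleted (quantities evaluated just before the deletion): partition the nodes of $N(v,G)$ whose current ID differs from that of $v$ into classes of equal current ID; $UN(v,G)$ consists of one node per class, the one with lowest initial ID. Let $S=UN(v,G)\cup N(v,G')$. Order $S$ by increasing $\delta$ and place it in this order into a complete binary tree with $|S|$ positions, filled level by level from the top and left to right; add to the network and to $E'$ the edge between each node of $S$ and the node at its parent position. Then all nodes of the component of $G'$ containing $S$ set their ID to the minimum current ID in $S$. Weights: every node $u$ has weight $w(u)$, initially $1$; when a node $v$ is deleted, $w(v)$ is added to the weight of an arbitrarily chosen node of $N(v,G')$. For a subgraph $H$, $W(H)$ is the sum of the weights of its vertices. For distinct surviving nodes $x,y$, $T(x,y)$ is the connected component of $G'-y$ containing $x$. Define $\mathrm{rem}(v)=\sum_{u\in N(v,G')}W(T(u,v))-\max_{u\in N(v,G')}W(T(u,v))+w(v)$ (the maximum over the empty set being $0$). *)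

From mathcomp Require Import reals.
From HB Require Import structures.
From mathcomp Require Import all_boot all_order all_algebra.

Set Implicit Arguments. Unset Strict Implicit. Unset Printing Implicit Defensive.
Import Order.TTheory GRing.Theory Num.Theory.

Section DASH.
Variable R : realType.
Variable T : finType.
Variable G0 : rel T.
Variable id0 : T -> R.

(* A state of the execution. The current network G has vertex set [alive]
   and edge relation [E] restricted to [alive]; [H] records all healing edges
   added so far, and E' = H restricted to [alive]. *)
Record state := State {
  alive : {set T};
  E : rel T;
  H : rel T;
  cid : T -> R;
  w : T -> nat
}.

Definition init_state : state :=
  State [set: T] G0 (fun _ _ => false) id0 (fun _ => 1%N).

Definition nbrG (s : state) (u : T) : {set T} := [set x in alive s | E s u x].
Definition nbrGp (s : state) (u : T) : {set T} := [set x in alive s | H s u x].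

Definition delta (s : state) (u : T) : int :=
  (#|nbrG s u|%:Z - #|[set x | G0 u x]|%:Z)%R.

Definition Gp_rel (s : state) : rel T :=
  fun a b => [&& a \in alive s, b \in alive s & H s a b].

Definition Gp_minus (s : state) (y : T) : rel T :=
  fun a b => [&& a \in alive s :\ y, b \in alive s :\ y & H s a b].

Definition Tcomp (s : state) (x y : T) : {set T} :=
  [set z | connect (Gp_minus s y) x z].

Definition Wt (s : state) (A : {set T}) : nat := (\sum_(z in A) w s z)%N.

Definition rem_dash (s : state) (v : T) : nat :=
  ((\sum_(u in nbrGp s v) Wt s (Tcomp s u v))
   - (\max_(u in nbrGp s v) Wt s (Tcomp s u v)) + w s v)%N.

(* edges of the complete binary tree whose positions (level order, from the
   top, left to right; 0-indexed) are filled by the list l: position i >= 1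
   has parent position (i-1)/2. *)
Definition tree_edge (l : seq T) (a b : T) : bool :=
  has (fun i => ((a == nth a l i) && (b == nth a l (i.-1 %/ 2)))
             || ((b == nth a l i) && (a == nth a l (i.-1 %/ 2))))
      (iota 1 (size l).-1).

(* U is a valid choice of UN(v,G): one node per class of equal current ID
   among the neighbours of v with current ID different from v's, namely one
   with lowest initial ID in its class. *)
Definition UN_spec (s : state) (v : T) (U : {set T}) : Prop :=
  let C := [set x in nbrG s v | cid s x != cid s v] in
  [/\ U \subset C,
      (forall x, x \in C -> exists2 u, u \in U & cid s u = cid s x),
      (forall u1 u2, u1 \in U -> u2 \in U -> cid s u1 = cid s u2 -> u1 = u2)
    & (forall u y, u \in U -> y \in C -> cid s y = cid s u -> (id0 u <= id0 y)%R)].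

(* The remaining
   freedom (ties in UN, order of S among equal delta, the node receiving
   w(v)) is existentially quantified, i.e. every such resolution is allowed. *)
Definition dash_step (s : state) (v : T) (s' : state) : Prop :=
  v \in alive s /\
  exists (U : {set T}) (l : seq T) (r : T) (m : R),
    let S := U :|: nbrGp s v in
    [/\ UN_spec s v U,
        uniq l /\ [set x in l] = S,
        sorted (fun a b => (delta s a <= delta s b)%R) l,
        (nbrGp s v != set0 -> r \in nbrGp s v)
      & (S != set0 -> (m \in [seq cid s y | y <- l]) /\
                      (forall y, y \in l -> (m <= cid s y)%R))] /\
    [/\ alive s' = alive s :\ v,
        E s' = (fun a b => E s a b || tree_edge l a b),
        H s' = (fun a b => H s a b || tree_edge l a b),
        cid s' = (fun x => if [exists y in S, connect (Gp_rel s') y x]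
                           then m else cid s x)
      & w s' = (if nbrGp s v == set0 then w s
                else fun x => (w s x + (x == r) * w s v)%N)].

Inductive reachable : state -> Prop :=
| reach_init : reachable init_state
| reach_step s v s' : reachable s -> dash_step s v s' -> reachable s'.

End DASH.

From HB Require Import structures.
From mathcomp Require Import all_boot all_order all_algebra zify reals exp.

Set Implicit Arguments. Unset Strict Implicit. Unset Printing Implicit Defensive.
Import Order.TTheory GRing.Theory Num.Theory.

(* DASH keeps G' a forest on whose components the current ID is constant, so
   the nodes of S lie in distinct components of G' - v and the healing tree
   keeps G' a forest.  When v is deleted, a survivor u outside S, or in S with
   at most one tree neighbour, gains no degree and rem(u) does not decrease:
   the subtrees at u only grow, and whatever was reached through v reappears
   under a tree neighbour of u, while w(v) moves to a G'-neighbour of v.  A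
   node u of S with two or three tree neighbours gains at most 2 in degree, and
   rem'(u) >= 2 min(rem(y1), rem(y2), rem(u)) for nodes y1, y2 of S placed after
   u in the delta-sorted order; by induction 2^(delta'(u)/2) <= 2 2^(delta(u)/2)
   <= rem'(u). *)

Section Acyclic.
Variable T : finType.
Implicit Types (e : rel T) (a b c d u v x y : T).

Lemma connect_ind e a (P : T -> Prop) : P a ->
  (forall c d, connect e a c -> e c d -> P c -> P d) ->
  forall b, connect e a b -> P b.
Proof.
move=> Pa IH b /connectP[p pth ->]; elim/last_ind: p pth => [//|p y IHp].
rewrite rcons_path last_rcons => /andP[pth ey].
apply: (IH (last a p)) => //; last exact: IHp.
by apply/connectP; exists p.
Qed.

Lemma connect_mono e e' : subrel e e' -> subrel (connect e) (connect e').
Proof. by move=> ee'; apply: connect_sub => x y /ee' /connect1. Qed.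

Lemma connect_restrict e (P : pred T) a b : connect e a b ->
  (forall z, connect e a z -> P z) ->
  connect [rel x y | [&& P x, P y & e x y]] a b.
Proof.
move=> cab HP; move: b cab; apply: connect_ind => // c d ac ecd Hc.
apply: connect_trans Hc (connect1 _) => /=.
by rewrite ecd HP // (HP d) //; apply: connect_trans ac (connect1 ecd).
Qed.

Lemma connect_last_edge e a b : connect e a b -> a != b -> exists c, e c b.
Proof.
move=> cab; suff : b = a \/ exists c, e c b by case=> [->|//]; rewrite eqxx.
move: b cab; apply: connect_ind; first by left.
by move=> c d _ ecd _; right; exists c.
Qed.

Definition delv e v : rel T := fun a b => [&& a != v, b != v & e a b].

Lemma delv_sym e v : symmetric e -> symmetric (delv e v).
Proof. by move=> se x y; rewrite /delv se andbCA. Qed.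

Lemma connect_delv e v x y : connect (delv e v) x y -> connect e x y.
Proof. by apply: connect_mono => p q /and3P[]. Qed.

Lemma connect_delv_neq e y u z : connect (delv e y) u z -> u != y -> z != y.
Proof.
move=> c uy; case: (eqVneq u z) => [<-//|nuz].
by have [c' /and3P[]] := connect_last_edge c nuz.
Qed.

(* For a symmetric irreflexive [e]: no cycle passes through [v], i.e. [e] is a forest. *)
Definition acyclic e := forall v u1 u2, e v u1 -> e v u2 -> u1 != u2 ->
  ~~ connect (delv e v) u1 u2.

Lemma eq_acyclic e e' : e =2 e' -> acyclic e -> acyclic e'.
Proof.
move=> ee' ac v u1 u2; rewrite -!ee' => h1 h2 n12.
by rewrite -(eq_connect (_ : delv e v =2 delv e' v)) ?ac // => p q; rewrite /delv ee'.
Qed.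

Lemma acyclic_delv e x : acyclic e -> acyclic (delv e x).
Proof.
move=> ac v u1 u2 /and3P[_ _ e1] /and3P[_ _ e2] n12; apply/negP => c.
move/negP: (ac _ _ _ e1 e2 n12); apply.
by apply: connect_mono c => p q /and3P[pv qv /and3P[_ _ pq]]; rewrite /delv pv qv.
Qed.

Definition add_edge e a b : rel T :=
  fun x y => [|| e x y, (x == a) && (y == b) | (x == b) && (y == a)].

Lemma add_edgeC e a b : add_edge e a b =2 add_edge e b a.
Proof. by move=> p q; rewrite /add_edge [X in _ || X]orbC. Qed.

Lemma connect_add_edge e a b x y : connect (add_edge e a b) x y ->
  [\/ connect e x y, connect e x a && connect e b y |
      connect e x b && connect e a y].
Proof.
move: y; apply: connect_ind; first by apply: Or31.
move=> c d _ /or3P[ecd|/andP[/eqP-> /eqP->]|/andP[/eqP-> /eqP->]].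
- case=> [xc|/andP[xa bc]|/andP[xb ac]].
  + by apply: Or31; apply: connect_trans xc (connect1 ecd).
  + by apply: Or32; rewrite xa (connect_trans bc (connect1 ecd)).
  + by apply: Or33; rewrite xb (connect_trans ac (connect1 ecd)).
- case=> [xa|/andP[xa _]|/andP[xb _]].
  + by apply: Or32; rewrite xa connect0.
  + by apply: Or32; rewrite xa connect0.
  + exact: Or31.
- case=> [xb|/andP[xa _]|/andP[xb _]].
  + by apply: Or33; rewrite xb connect0.
  + exact: Or31.
  + by apply: Or33; rewrite xb connect0.
Qed.

Section AddEdge.
Variable e : rel T.
Hypotheses (se : symmetric e) (ac : acyclic e).

Let connect_sym_e x y : connect e x y = connect e y x.
Proof. exact: sym_connect_sym. Qed.

Let acyclic_add_edge_at a b u1 u2 : ~~ connect e a b ->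
  add_edge e a b a u1 -> add_edge e a b a u2 -> u1 != u2 ->
  ~~ connect (delv (add_edge e a b) a) u1 u2.
Proof.
move=> nab h1 h2 n12.
have Ea : delv (add_edge e a b) a =2 delv e a.
  move=> p q; rewrite /delv /add_edge.
  by case: (p =P a); case: (q =P a) => //= _ _; rewrite !andbF !orbF.
rewrite (eq_connect Ea).
have ab : a != b by apply: contraNneq nab => ->; rewrite connect0.
have nbr u : add_edge e a b a u -> e a u \/ u = b.
  move=> /or3P[|/andP[_ /eqP]|/andP[/eqP ab' _]]; [by left|by right|].
  by move: ab; rewrite ab' eqxx.
case: (nbr _ h1) => [e1|?]; case: (nbr _ h2) => [e2|?]; subst.
- exact: ac.
- by apply: contraNN nab => /connect_delv; apply: connect_trans (connect1 e1).
- apply: contraNN nab => /connect_delv; rewrite connect_sym_e.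
  exact: connect_trans (connect1 e2).
- by rewrite eqxx in n12.
Qed.

Lemma acyclic_add_edge a b : ~~ connect e a b -> acyclic (add_edge e a b).
Proof.
move=> nab v u1 u2.
case: (v =P a) => [->|va]; first exact: acyclic_add_edge_at.
case: (v =P b) => [->|vb].
  rewrite !(add_edgeC e a) (eq_connect (_ : delv _ b =2 delv (add_edge e b a) b)).
    by apply: acyclic_add_edge_at; rewrite connect_sym_e.
  by move=> p q; rewrite /delv add_edgeC.
move=> h1 h2 n12.
have nbr u : add_edge e a b v u -> e v u.
  by move=> /or3P[//|/andP[/eqP]|/andP[/eqP]].
have e1 := nbr _ h1; have e2 := nbr _ h2.
have Ev : delv (add_edge e a b) v =2 add_edge (delv e v) a b.
  move=> p q; rewrite /delv /add_edge.
  have av : a != v by rewrite eq_sym; apply/eqP.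
  have bv : b != v by rewrite eq_sym; apply/eqP.
  apply/idP/idP.
    by move=> /and3P[-> -> /or3P[->|->|->]]; rewrite ?orbT.
  by move=> /or3P[/and3P[-> -> ->]//|/andP[/eqP-> /eqP->]|/andP[/eqP-> /eqP->]];
    rewrite av bv !eqxx ?orbT.
have u1v : connect e u1 v by rewrite connect_sym_e connect1.
have vu2 : connect e v u2 := connect1 e2.
apply/negP; rewrite (eq_connect Ev).
case/connect_add_edge=> [c|/andP[/connect_delv c1 /connect_delv c2]|
                           /andP[/connect_delv c1 /connect_delv c2]].
- by move/negP: (ac e1 e2 n12).
- move/negP: nab; apply; rewrite connect_sym_e in c1; rewrite connect_sym_e in c2.
  exact: connect_trans c1 (connect_trans u1v (connect_trans vu2 c2)).
- move/negP: nab; rewrite connect_sym_e; apply.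
  rewrite connect_sym_e in c1; rewrite connect_sym_e in c2.
  exact: connect_trans c1 (connect_trans u1v (connect_trans vu2 c2)).
Qed.

End AddEdge.

End Acyclic.

Definition parent j := j.-1 %/ 2.

Lemma parent_lt j : 0 < j -> parent j < j.
Proof. by case: j => // j _; rewrite ltnS leq_div. Qed.

Lemma parent_eq i k : 0 < i -> (parent i == k) = (i == k.*2.+1) || (i == k.*2.+2).
Proof. rewrite /parent => i0; apply/eqP/orP; rewrite -!muln2; [move=> <-|]; lia. Qed.

Lemma parent_double k : parent k.*2.+1 = k.
Proof. rewrite /parent -muln2; lia. Qed.

Lemma parent_doubleS k : parent k.*2.+2 = k.
Proof. rewrite /parent -muln2; lia. Qed.

Section HeapTree.
Variables (T : finType) (x0 : T) (l : seq T).
Implicit Types (e : rel T) (a b : T).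
Local Notation L i := (nth x0 l i).

Definition heap_edge n : rel T := fun a b =>
  has (fun i => ((a == L i) && (b == L (parent i))) || ((b == L i) && (a == L (parent i))))
      (iota 1 n).

Lemma tree_edgeE : tree_edge l =2 heap_edge (size l).-1.
Proof.
move=> a b; apply: eq_in_has => i; rewrite mem_iota => /andP[i1 i2].
have ik : i < size l by move: i2 i1; case: (size l) => //= *; lia.
have pk : parent i < size l by apply: ltn_trans (parent_lt i1) ik.
by rewrite -/(parent i) (set_nth_default x0 a ik) (set_nth_default x0 a pk).
Qed.

Lemma heap_edge_sym n : symmetric (heap_edge n).
Proof. by move=> a b; apply: eq_has => i; rewrite orbC. Qed.

Lemma heap_edgeS n : heap_edge n.+1 =2 add_edge (heap_edge n) (L n.+1) (L (parent n.+1)).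
Proof.
move=> a b; rewrite /heap_edge /add_edge.
have -> : iota 1 n.+1 = iota 1 n ++ [:: n.+1] by rewrite -[n.+1 in LHS]addn1 iotaD.
by rewrite has_cat /= orbF [X in _ || (_ || X)]andbC.
Qed.

Lemma heap_edgeP n a b : heap_edge n a b -> exists2 i, 1 <= i <= n &
  ((a == L i) && (b == L (parent i))) || ((b == L i) && (a == L (parent i))).
Proof. by case/hasP=> i; rewrite mem_iota add1n ltnS; exists i. Qed.

Lemma heap_edge_parent n i : 1 <= i <= n -> heap_edge n (L i) (L (parent i)).
Proof.
case/andP=> i1 i2; apply/hasP; exists i; last by rewrite !eqxx.
by rewrite mem_iota i1 add1n ltnS.
Qed.

Lemma heap_edge_tree i : 0 < i < size l -> heap_edge (size l).-1 (L i) (L (parent i)).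
Proof.
by case/andP=> i0 ik; apply: heap_edge_parent; rewrite i0 -ltnS prednK // (ltn_trans i0).
Qed.

Lemma heap_connect0 i : i < size l -> connect (heap_edge (size l).-1) (L i) (L 0).
Proof.
elim/ltn_ind: i => -[_ _|i IH ik]; first exact: connect0.
have pl := parent_lt (ltn0Sn i).
apply: connect_trans (connect1 (heap_edge_tree _)) (IH _ pl (ltn_trans pl ik)).
by rewrite ltn0Sn.
Qed.

Lemma heap_connect a b : a \in l -> b \in l -> connect (heap_edge (size l).-1) a b.
Proof.
move=> /(nthP x0)[i ik <-] /(nthP x0)[j jk <-].
apply: connect_trans (heap_connect0 ik) _.
by rewrite (sym_connect_sym (@heap_edge_sym _)) heap_connect0.
Qed.

Section Forest.
Variable e : rel T.
Hypothesis se : symmetric e.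
Hypothesis l_apart : forall i j, i < size l -> j < size l -> i != j ->
  ~~ connect e (L i) (L j).

Let relU_heap_edgeS n :
  relU e (heap_edge n.+1) =2 add_edge (relU e (heap_edge n)) (L n.+1) (L (parent n.+1)).
Proof. by move=> a b; rewrite /relU /= heap_edgeS /add_edge !orbA. Qed.

Lemma connect_relU_heap_edge n : n < size l -> forall p q,
  connect (relU e (heap_edge n)) p q ->
  connect e p q \/ exists i1 i2, [/\ i1 <= n, i2 <= n,
     connect e p (L i1) & connect e (L i2) q].
Proof.
elim: n => [_ p q|n IH nk p q].
  by rewrite (eq_connect (_ : relU e (heap_edge 0) =2 e)); [left|move=> a b; rewrite /= orbF].
have pn : parent n.+1 <= n by rewrite -ltnS parent_lt.
have IH' p' q' : connect (relU e (heap_edge n)) p' q' -> connect e p' q' \/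
  exists i1 i2, [/\ i1 <= n.+1, i2 <= n.+1, connect e p' (L i1) & connect e (L i2) q'].
  case/(IH (ltnW nk)) => [|[i1 [i2 [h1 h2 h3 h4]]]]; first by left.
  by right; exists i1, i2; split=> //; apply: leqW.
have exit k p' : k <= n.+1 -> connect (relU e (heap_edge n)) p' (L k) ->
    exists i1, i1 <= n.+1 /\ connect e p' (L i1).
  move=> kn /IH' [|[i1 [i2 [h1 _ h3 _]]]]; [by exists k|by exists i1].
have enter k q' : k <= n.+1 -> connect (relU e (heap_edge n)) (L k) q' ->
    exists i2, i2 <= n.+1 /\ connect e (L i2) q'.
  move=> kn /IH' [|[i1 [i2 [_ h2 _ h4]]]]; [by exists k|by exists i2].
rewrite (eq_connect (relU_heap_edgeS n)) => /connect_add_edge[/IH'//|/andP[c1 c2]|/andP[c1 c2]].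
- have [i1 [h1 h3]] := exit _ _ (leqnn _) c1.
  have [i2 [h2 h4]] := enter _ _ (leqW pn) c2.
  by right; exists i1, i2.
- have [i1 [h1 h3]] := exit _ _ (leqW pn) c1.
  have [i2 [h2 h4]] := enter _ _ (leqnn _) c2.
  by right; exists i1, i2.
Qed.

Lemma acyclic_relU_heap_edge n : acyclic e -> n < size l -> acyclic (relU e (heap_edge n)).
Proof.
move=> ac; elim: n => [_|n IH nk].
  by apply: eq_acyclic ac => a b; rewrite /= orbF.
have pn : parent n.+1 <= n by rewrite -ltnS parent_lt.
apply: eq_acyclic (fun a b => esym (relU_heap_edgeS n a b)) _.
have sU : symmetric (relU e (heap_edge n)).
  by move=> a b; rewrite /= se heap_edge_sym.
apply: (acyclic_add_edge sU (IH (ltnW nk))).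
apply/negP => /(connect_relU_heap_edge (ltnW nk)) [c|[i1 [i2 [hi1 hi2 c1 c2]]]].
  have np : n.+1 != parent n.+1 by rewrite neq_ltn parent_lt ?orbT.
  by move/negP: (l_apart nk (leq_ltn_trans pn (ltnW nk)) np); apply.
have np : n.+1 != i1 by rewrite neq_ltn ltnS hi1 orbT.
by move/negP: (l_apart nk (leq_ltn_trans hi1 (ltnW nk)) np); apply.
Qed.

End Forest.

Section AvoidNode.
Hypothesis ul : uniq l.
Variable k : nat.
Hypothesis kl : k < size l.
Local Notation v := (L k).
Local Notation te := (heap_edge (size l).-1).
Local Notation te' := (delv te v).

Let heap_edge_avoid i : 0 < i < size l -> i != k -> parent i != k ->
  te' (L i) (L (parent i)).
Proof.
move=> /andP[i0 il] ik pik; rewrite /delv !nth_uniq ?ik ?pik ?heap_edge_tree ?i0 //.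
exact: ltn_trans (parent_lt i0) il.
Qed.

(* Only the positions [2k+1] and [2k+2] have parent [k], so the ancestors of
   [j <= 2k] avoid [k]. *)
Let connect_avoid_root j : j < size l -> j != k -> j < k.*2.+1 -> connect te' (L j) (L 0).
Proof.
elim/ltn_ind: j => -[_ _ _ _|j IH jl jk jlt]; first exact: connect0.
have pl := parent_lt (ltn0Sn j).
have pk : parent j.+1 != k.
  by rewrite parent_eq //; apply/negP => /orP[] /eqP E; move: jlt; rewrite E -!muln2; lia.
apply: connect_trans (connect1 (heap_edge_avoid _ jk pk)) (IH _ pl _ pk _).
- by rewrite jl.
- exact: ltn_trans pl jl.
- exact: ltn_trans pl jlt.
Qed.

Lemma heap_nbr_connect j : j < size l -> j != k -> exists2 t, te v t & connect te' t (L j).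
Proof.
elim/ltn_ind: j => -[_ l0 k0|j IH jl jk].
  have k0' : 0 < k by rewrite lt0n eq_sym.
  exists (L (parent k)); first by rewrite heap_edge_tree ?k0'.
  apply: connect_avoid_root; first exact: ltn_trans (parent_lt k0') kl.
    by rewrite neq_ltn parent_lt.
  by apply: ltn_trans (parent_lt k0') _; rewrite ltnS -addnn leq_addr.
have pl := parent_lt (ltn0Sn j).
case: (eqVneq (parent j.+1) k) => [pe|pk].
  by exists (L j.+1); rewrite ?connect0 // -pe heap_edge_sym heap_edge_tree.
have [t vt ct] := IH _ pl (ltn_trans pl jl) pk.
exists t => //; apply: connect_trans ct (connect1 _).
by rewrite delv_sym ?heap_edge_avoid //; apply: heap_edge_sym.
Qed.

(* [k] has at least two neighbours in the heap tree. *)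
Definition branching := (k.*2.+2 < size l) || (0 < k) && (k.*2.+1 < size l).

Lemma heap_two_nbrs : branching ->
  exists t1 t2 j1 j2, [/\ t1 != t2, te v t1, te v t2,
    connect te' t1 (L j1) & connect te' t2 (L j2)] /\
    [/\ k < j1, j1 < size l, k < j2 & j2 < size l].
Proof.
have child i : k.*2 < i -> i < size l -> parent i = k -> te v (L i).
  by move=> ki il <-; rewrite heap_edge_sym heap_edge_tree // il (leq_ltn_trans _ ki).
case/orP=> [h|/andP[k0 h]].
  exists (L k.*2.+1), (L k.*2.+2), k.*2.+1, k.*2.+2; split; last first.
    by move: h; rewrite -!muln2 => h; split; lia.
  split; rewrite ?connect0 //.
  - by rewrite nth_uniq // ?(ltn_trans _ h) // eqSS neq_ltn ltnSn.
  - by apply: child; rewrite ?parent_double ?(ltn_trans _ h) // ?ltnSn.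
  - by apply: child; rewrite ?parent_doubleS.
have pl := parent_lt k0.
have pkl := ltn_trans pl kl.
have pk2 : parent k < k.*2.+1 by apply: ltn_trans pl _; rewrite ltnS -addnn leq_addr.
exists (L k.*2.+1), (L (parent k)), k.*2.+1, k.+1; split; last first.
  by move: h k0; rewrite -!muln2 => h k0; split; lia.
split.
- by rewrite nth_uniq // neq_ltn pk2 orbT.
- by apply: child; rewrite ?parent_double ?ltnSn.
- by rewrite heap_edge_tree ?k0.
- exact: connect0.
- apply: connect_trans (connect_avoid_root pkl _ pk2) _; first by rewrite neq_ltn pl.
  rewrite (sym_connect_sym (delv_sym _ (@heap_edge_sym _))) connect_avoid_root //.
  + by apply: leq_ltn_trans h; rewrite -addnn; lia.
  + by rewrite neq_ltn ltnSn orbT.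
  + by rewrite ltnS -addnn; lia.
Qed.

Let heap_nbrs := (if 0 < k then [set L (parent k)] else set0) :|:
  (if k.*2.+1 < size l then [set L k.*2.+1] else set0) :|:
  (if k.*2.+2 < size l then [set L k.*2.+2] else set0).

Let heap_nbrs_sub : [set t | te v t] \subset heap_nbrs.
Proof.
apply/subsetP=> t; rewrite inE /heap_nbrs => /heap_edgeP[i /andP[i1 ik]].
have il : i < size l by move: ik i1; clear; lia.
case/orP=> /andP[/eqP hv /eqP ht].
  have ki : i = k by apply/eqP; rewrite -(nth_uniq x0 il kl ul) hv.
  by subst i; rewrite i1 !inE ht eqxx.
have pil : parent i < size l by apply: ltn_trans (parent_lt i1) il.
have /eqP : parent i = k by apply/eqP; rewrite -(nth_uniq x0 pil kl ul) ht.
by rewrite parent_eq // => /orP[] /eqP ik'; subst i; rewrite il !inE hv eqxx ?orbT.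
Qed.

Lemma heap_deg_le3 : #|[set t | te v t]| <= 3.
Proof.
apply: leq_trans (subset_leq_card heap_nbrs_sub) _.
apply: (leq_trans (leq_card_setU _ _)); rewrite -[3]/(2 + 1); apply: leq_add.
  apply: (leq_trans (leq_card_setU _ _)); rewrite -[2]/(1 + 1); apply: leq_add.
all: by case: ifP; rewrite ?cards1 ?cards0.
Qed.

Lemma heap_deg_le1 : ~~ branching -> #|[set t | te v t]| <= 1.
Proof.
move=> nb; apply: leq_trans (subset_leq_card heap_nbrs_sub) _.
have h2 : (k.*2.+2 < size l) = false by apply: negbTE; apply: contra nb => h; rewrite /branching h.
rewrite /heap_nbrs h2 setU0; case: (posnP k) => [-> /=|k0].
  by rewrite set0U; case: ifP; rewrite ?cards1 ?cards0.
have h1 : (k.*2.+1 < size l) = false.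
  by apply: negbTE; apply: contra nb => h; rewrite /branching k0 h orbT.
by rewrite h1 setU0 cards1.
Qed.

End AvoidNode.
End HeapTree.

Section Sums.
Variable T : finType.
Implicit Types (A B I N : {set T}) (b : T -> nat).

Lemma leq_sum_sub (P P' : pred T) (F : T -> nat) :
  (forall t, P t -> P' t) -> \sum_(t | P t) F t <= \sum_(t | P' t) F t.
Proof. exact: (sub_le_big leqnn (fun m n => leq_addr n m)). Qed.

Lemma leq_sum_subset A B (F : T -> nat) :
  A \subset B -> \sum_(t in A) F t <= \sum_(t in B) F t.
Proof. by move/subsetP; apply: leq_sum_sub. Qed.

Lemma leq_sum_cover A I (F : T -> {set T}) (w : T -> nat) :
  (forall z, z \in A -> exists2 t, t \in I & z \in F t) ->
  \sum_(z in A) w z <= \sum_(t in I) \sum_(z in F t) w z.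
Proof.
move=> cover.
have -> : \sum_(t in I) \sum_(z in F t) w z =
          \sum_z \sum_(t in I) (if z \in F t then w z else 0).
  by rewrite exchange_big /=; apply: eq_bigr => t _; rewrite big_mkcond.
rewrite big_mkcond /=; apply: leq_sum => z _; case: ifP => // /cover[t tI zt].
by rewrite (bigD1 t) //= zt leq_addr.
Qed.

Lemma leq_sum_disjoint I B (F : T -> {set T}) (w : T -> nat) :
  (forall u, u \in I -> F u \subset B) ->
  (forall u u', u \in I -> u' \in I -> u != u' -> [disjoint F u & F u']) ->
  \sum_(u in I) \sum_(z in F u) w z <= \sum_(z in B) w z.
Proof.
move=> FB dF.
pose F' u := if u \in I then F u else set0.
have dF' i j : i != j -> [disjoint F' i & F' j].
  move=> ij; rewrite /F' -setI_eq0; case: ifP => hi; last by rewrite set0I.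
  by case: ifP => hj; [rewrite setI_eq0; apply: dF|rewrite setI0].
have -> : \sum_(u in I) \sum_(z in F u) w z = \sum_u \sum_(z in F' u) w z.
  rewrite big_mkcond /=; apply: eq_bigr => u _; rewrite /F'.
  by case: ifP => //; rewrite big_set0.
rewrite -(partition_disjoint_bigcup addn w dF'); apply: leq_sum_subset.
by apply/bigcupsP => u _; rewrite /F'; case: ifP => h; [exact: FB|exact: sub0set].
Qed.

Lemma leq_sum_sub_max N b x :
  \sum_(u in N) b u - \max_(u in N) b u <= \sum_(u in N :\ x) b u.
Proof.
case: (boolP (x \in N)) => xN.
  have bx : b x <= \max_(u in N) b u by apply: leq_bigmax_cond.
  by rewrite (big_setD1 x xN) /=; lia.
suff -> : N :\ x = N by rewrite leq_subr.
by apply/setP => y; rewrite !inE andb_idl // => yN; apply: contraNneq xN => <-.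
Qed.

Definition rem_of N b w0 := \sum_(u in N) b u - \max_(u in N) b u + w0.

(* Monotonicity of [rem_of] under a redistribution of the masses [b] along
   [psi : N1 -> N0], up to slacks [d] paid by the increase of the weight. *)
Lemma rem_of_mono N0 N1 b b' w0 w1 (psi : T -> T) (d : T -> nat) :
  (forall u, u \in N0 -> b u <= \sum_(t in N1 | psi t == u) b' t + d u) ->
  w0 + \sum_(u in N0) d u <= w1 ->
  rem_of N0 b w0 <= rem_of N1 b' w1.
Proof.
rewrite /rem_of => hb hw.
case: (set_0Vmem N1) => [N1_0|[t0 t0N1]].
  have : \sum_(u in N0) b u <= \sum_(u in N0) d u.
    by apply: leq_sum => u /hb; rewrite N1_0 big_pred0 // => y; rewrite inE.
  by rewrite N1_0 big_set0; lia.
set ts := [arg max_(t > t0 in N1) b' t].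
have tsN1 : ts \in N1 by rewrite /ts; case: arg_maxnP.
have -> : \max_(t in N1) b' t = b' ts by apply: bigmax_eq_arg.
rewrite (big_setD1 ts tsN1) /= addKn.
have sum1 := leq_sum_sub_max N0 b (psi ts).
have sum2 : \sum_(u in N0 :\ psi ts) b u <=
    \sum_(u in N0 :\ psi ts) \sum_(t in N1 | psi t == u) b' t + \sum_(u in N0) d u.
  apply: leq_trans (_ : \sum_(u in N0 :\ psi ts) (\sum_(t in N1 | psi t == u) b' t + d u) <= _).
    by apply: leq_sum => u; rewrite inE => /andP[_ /hb].
  by rewrite big_split /= leq_add2l; apply/leq_sum_subset/subsetDl.
have sum3 : \sum_(u in N0 :\ psi ts) \sum_(t in N1 | psi t == u) b' t <=
    \sum_(t in N1 :\ ts) b' t.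
  set Q := N0 :\ psi ts.
  have -> : \sum_(u in Q) \sum_(t in N1 | psi t == u) b' t =
            \sum_(t | (t \in N1) && (psi t \in Q)) b' t.
    rewrite [RHS](partition_big psi (mem Q)) //; last by move=> t /andP[].
    apply: eq_bigr => u uQ; apply: eq_bigl => t.
    by case: eqP => [->|]; rewrite ?andbT ?andbF // uQ andbT.
  apply: leq_sum_sub => t /andP[tN1]; rewrite !inE tN1 andbT.
  by case/andP=> + _; apply: contra_neq => ->.
lia.
Qed.

Lemma double_le_rem_of N b w0 a t1 t2 : t1 \in N -> t2 \in N -> t1 != t2 ->
  a <= b t1 -> a <= b t2 -> a <= w0 + \sum_(t in N :\ t1 :\ t2) b t ->
  a + a <= rem_of N b w0.
Proof.
move=> t1N t2N t12 a1 a2 a3; rewrite /rem_of.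
have setD1C A x y : A :\ x :\ y = A :\ y :\ x by rewrite !setDDl setUC.
set ts := [arg max_(t > t1 in N) b t].
have tsN : ts \in N by rewrite /ts; case: arg_maxnP.
have -> : \max_(t in N) b t = b ts by apply: bigmax_eq_arg.
rewrite (big_setD1 ts tsN) /= addKn.
have t2N1 : t2 \in N :\ t1 by rewrite !inE eq_sym t12.
case: (eqVneq ts t1) => [->|n1]; first by rewrite (big_setD1 t2 t2N1) /=; lia.
case: (eqVneq ts t2) => [->|n2].
  have t1N2 : t1 \in N :\ t2 by rewrite !inE t12.
  rewrite (big_setD1 t1 t1N2) /= [N :\ t2 :\ t1]setD1C; lia.
have t1N' : t1 \in N :\ ts by rewrite !inE eq_sym n1.
have t2N' : t2 \in N :\ ts :\ t1 by rewrite !inE eq_sym t12 eq_sym n2.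
by rewrite (big_setD1 t1 t1N') (big_setD1 t2 t2N') /=; lia.
Qed.

End Sums.

Section Invariant.
Variables (R : realType) (T : finType).
Implicit Types (s : state R T) (x y z u v : T).

Record dash_inv s : Prop := DashInv {
  E_sym : symmetric (E s);
  H_sym : symmetric (H s);
  H_sub_E : subrel (H s) (E s);
  H_irr : irreflexive (H s);
  cid_Gp : forall a b, Gp_rel s a b -> cid s a = cid s b;
  Gp_acyclic : acyclic (Gp_rel s)
}.

Lemma Gp_sym s : symmetric (H s) -> symmetric (Gp_rel s).
Proof. by move=> sH a b; rewrite /Gp_rel sH andbCA. Qed.

Lemma Gp_minusE s y : Gp_minus s y =2 delv (Gp_rel s) y.
Proof.
move=> a b; rewrite /Gp_minus /delv /Gp_rel !in_setD1.
by case: (a != y); case: (b != y); rewrite //= ?andbF.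
Qed.

Lemma TcompE s u y : Tcomp s u y = [set z | connect (delv (Gp_rel s) y) u z].
Proof. by apply/setP => z; rewrite !inE (eq_connect (Gp_minusE s y)). Qed.

Lemma mem_Tcomp s u y : u \in Tcomp s u y.
Proof. by rewrite TcompE inE connect0. Qed.

Lemma nbrGpE s v u : v \in alive s -> (u \in nbrGp s v) = Gp_rel s v u.
Proof. by move=> hv; rewrite /nbrGp /Gp_rel inE hv. Qed.

Lemma rem_dashE s v :
  rem_dash s v = rem_of (nbrGp s v) (fun u => Wt s (Tcomp s u v)) (w s v).
Proof. by []. Qed.

(* All subtrees at [y] but the one containing [x] lie, together with [y], in [T(y,x)]. *)
Lemma rem_le_Wt_Tcomp s y x : dash_inv s -> y \in alive s -> y != x ->
  rem_dash s y <= Wt s (Tcomp s y x).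
Proof.
case=> _ sH _ iH _ ac hy yx.
set N := nbrGp s y.
have yN u : u \in N -> Gp_rel s y u by rewrite /N nbrGpE.
have uy u : u \in N -> u != y.
  by move/yN/and3P=> [_ _]; apply: contraTneq => ->; rewrite iH.
have disj u1 u2 z : u1 \in N -> u2 \in N -> u1 != u2 ->
    z \in Tcomp s u1 y -> z \in Tcomp s u2 y -> False.
  move=> h1 h2 n12; rewrite !TcompE !inE => c1 c2.
  move/negP: (ac _ _ _ (yN _ h1) (yN _ h2) n12); apply.
  by apply: connect_trans c1 _; rewrite (sym_connect_sym (delv_sym _ (Gp_sym sH))).
pose u0 := odflt x [pick u in N | x \in Tcomp s u y].
have xT u : u \in N -> u != u0 -> x \notin Tcomp s u y.
  move=> hu; rewrite /u0; case: pickP => [u1 /andP[h1 x1]|nx] /= nu.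
    by apply/negP => x2; apply: (disj u u1 x) => //; rewrite eq_sym.
  by move: (nx u); rewrite hu /= => ->.
rewrite rem_dashE /rem_of -/N.
apply: leq_trans (_ : \sum_(u in N :\ u0) Wt s (Tcomp s u y) + w s y <= _).
  by rewrite leq_add2r leq_sum_sub_max.
rewrite /Wt (big_setD1 y (mem_Tcomp s y x)) addnC leq_add2l.
apply: leq_sum_disjoint => [u|u u']; rewrite ?in_setD1.
  move=> /andP[nu hu]; apply/subsetP => z.
  have xu := xT _ hu nu.
  rewrite !TcompE !inE => c; rewrite (connect_delv_neq c (uy _ hu)) /=.
  have yxu : delv (Gp_rel s) x y u.
    by rewrite /delv yx (yN _ hu) andbT; apply: contraNneq xu => <-; apply: mem_Tcomp.
  apply: connect_trans (connect1 yxu) _.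
  have := connect_restrict c (P := fun z => z \in Tcomp s u y) _.
  move/(_ _)/connect_mono; apply; last by move=> z'; rewrite TcompE inE.
  move=> p q /= /and3P[hp hq /and3P[_ _ e]]; rewrite /delv e andbT.
  by apply/andP; split; apply: contraNneq xu => <-.
move=> /andP[_ hu] /andP[_ hu'] n.
rewrite -setI_eq0; apply/eqP/setP => z; rewrite inE [_ \in set0]inE.
by apply/negP => /andP[z1 z2]; apply: (disj u u' z).
Qed.

End Invariant.

Section Step.
Variables (R : realType) (T : finType) (G0 : rel T) (id0 : T -> R).
Variables (s s' : state R T) (x : T) (U : {set T}) (l : seq T) (r : T) (m : R).
Hypothesis inv : dash_inv s.
Hypothesis hx : x \in alive s.
Let S := U :|: nbrGp s x.
Hypothesis hU : UN_spec id0 s x U.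
Hypothesis ul : uniq l.
Hypothesis lS : [set y in l] = S.
Hypothesis sl : sorted (fun a b => (delta G0 s a <= delta G0 s b)%R) l.
Hypothesis hr : nbrGp s x != set0 -> r \in nbrGp s x.
Hypothesis al' : alive s' = alive s :\ x.
Hypothesis E' : E s' = (fun a b => E s a b || tree_edge l a b).
Hypothesis H' : H s' = (fun a b => H s a b || tree_edge l a b).
Hypothesis cid' : cid s' = (fun z => if [exists y in S, connect (Gp_rel s') y z]
                           then m else cid s z).
Hypothesis w' : w s' = (if nbrGp s x == set0 then w s
                else fun z => (w s z + (z == r) * w s x)%N).

Local Notation L i := (nth x l i).
Local Notation te := (tree_edge l).
Local Notation Gpx := (delv (Gp_rel s) x).
Local Notation Gp' := (Gp_rel s').

Let sH : symmetric (H s) := H_sym inv.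
Let iH : irreflexive (H s) := H_irr inv.
Let sG : symmetric (Gp_rel s) := Gp_sym sH.

Lemma cid_connect a b : connect (Gp_rel s) a b -> cid s a = cid s b.
Proof. by move: b; apply: connect_ind => // c d _ /(cid_Gp inv) ->. Qed.

Lemma mem_l y : (y \in l) = (y \in S).
Proof. by rewrite -lS inE. Qed.

Lemma UN_prop y : y \in U -> [/\ y \in nbrG s x, cid s y != cid s x & y \in alive s].
Proof.
case: hU => /subsetP sub _ _ _ /sub; rewrite inE => /andP[hn hc].
by split=> //; move: hn; rewrite inE => /andP[].
Qed.

Lemma nbrGp_x_S y : y \in nbrGp s x -> y \in S.
Proof. by rewrite /S in_setU => ->; rewrite orbT. Qed.

Lemma S_alive y : y \in S -> y \in alive s :\ x.
Proof.
rewrite inE => /orP[/UN_prop[_ c a]|]; last rewrite nbrGpE // => /and3P[_ a h].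
  by rewrite in_setD1 a andbT; apply: contraNneq c => ->.
by rewrite in_setD1 a andbT; apply: contraTneq h => ->; rewrite iH.
Qed.

(* The nodes of [S] lie in pairwise distinct components of [G' - x]: two nodes
   of [UN] have distinct IDs, a node of [UN] has an ID different from those of
   the [G']-neighbours of [x], and [G'] is a forest. *)
Lemma S_apart a b : a \in S -> b \in S -> a != b -> ~~ connect Gpx a b.
Proof.
have cc p q : connect Gpx p q -> cid s p = cid s q by move/connect_delv/cid_connect.
move=> ha hb nab; apply/negP => c.
have Nx_cid y : y \in nbrGp s x -> cid s y = cid s x.
  by rewrite nbrGpE // => /(cid_Gp inv).
move: ha hb; rewrite /S !in_setU => /orP[ha|ha] /orP[hb|hb].
- by case: hU => _ _ uniqU _; move/eqP: nab; apply; apply: uniqU => //; apply: cc.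
- by have [_ + _] := UN_prop ha; rewrite (cc _ _ c) (Nx_cid _ hb) eqxx.
- by have [_ + _] := UN_prop hb; rewrite -(cc _ _ c) (Nx_cid _ ha) eqxx.
- by rewrite !nbrGpE // in ha hb; move/negP: (Gp_acyclic inv ha hb nab).
Qed.

Lemma tree_edge_mem a b : te a b -> a \in l /\ b \in l.
Proof.
rewrite (tree_edgeE x) => /heap_edgeP[i /andP[i1 ik]].
have il : i < size l by move: ik i1; clear; lia.
have pil : parent i < size l by apply: ltn_trans (parent_lt i1) il.
by case/orP=> /andP[/eqP-> /eqP->]; rewrite !mem_nth.
Qed.

Lemma tree_edge_S a b : te a b -> b \in S.
Proof. by case/tree_edge_mem=> _; rewrite mem_l. Qed.

Lemma tree_edge_sym : symmetric te.
Proof. by move=> a b; rewrite !(tree_edgeE x) heap_edge_sym. Qed.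

Lemma tree_edge_irr : irreflexive te.
Proof.
move=> a; apply/negP; rewrite (tree_edgeE x) => /heap_edgeP[i /andP[i1 ik]].
have il : i < size l by move: ik i1; clear; lia.
have pil : parent i < size l by apply: ltn_trans (parent_lt i1) il.
have := parent_lt i1; rewrite ltn_neqAle -(nth_uniq x pil il ul) orbb.
by case/andP=> pi _ /andP[/eqP ai /eqP api]; rewrite -ai -api eqxx in pi.
Qed.

Lemma tree_edge_alive a b : te a b -> (a \in alive s :\ x) && (b \in alive s :\ x).
Proof. by move/tree_edge_mem => [ha hb]; rewrite !S_alive // -mem_l. Qed.

Lemma Gp_step : Gp' =2 relU Gpx (heap_edge x l (size l).-1).
Proof.
move=> a b; rewrite /= /Gp_rel /delv al' H' -(tree_edgeE x).
case te_ab: (te a b); first by move/tree_edge_alive: te_ab => /andP[-> ->]; rewrite !orbT.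
by rewrite !orbF /Gp_rel !in_setD1; case: (a != x); case: (b != x); rewrite /= ?andbF.
Qed.

Lemma dash_inv_step : dash_inv s'.
Proof.
have sGp' : symmetric Gp' by apply: Gp_sym => p q; rewrite H' sH tree_edge_sym.
split.
- by move=> a b; rewrite E' (E_sym inv) tree_edge_sym.
- by move=> a b; rewrite H' sH tree_edge_sym.
- by move=> a b; rewrite H' E' => /orP[/(H_sub_E inv) ->|->]; rewrite ?orbT.
- by move=> a; rewrite H' iH tree_edge_irr.
- move=> a b hab; rewrite cid'.
  have -> : [exists y in S, connect Gp' y b] = [exists y in S, connect Gp' y a].
    apply/existsP/existsP => -[y /andP[hy c]]; exists y; rewrite hy /=.
      by apply: connect_trans c (connect1 _); rewrite sGp'.
    exact: connect_trans c (connect1 hab).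
  case: ifP => // /existsP nex.
  move: hab; rewrite Gp_step /= -(tree_edgeE x) => /orP[/and3P[_ _ /(cid_Gp inv)//]|].
  by move/tree_edge_mem=> [ha _]; case: nex; exists a; rewrite -mem_l ha connect0.
apply: eq_acyclic (fun a b => esym (Gp_step a b)) _.
have acGpx : acyclic Gpx := acyclic_delv (Gp_acyclic inv).
case: (posnP (size l)) => [l0|lpos].
  by apply: eq_acyclic acGpx => a b; rewrite /= l0 orbF.
apply: acyclic_relU_heap_edge acGpx _; first exact: delv_sym.
- move=> i j il jl ij; apply: S_apart; rewrite -?mem_l ?mem_nth //.
  by rewrite nth_uniq.
- by rewrite prednK.
Qed.

Lemma Gp'E a b : Gp' a b = Gpx a b || te a b.
Proof. by rewrite Gp_step /= -(tree_edgeE x). Qed.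

Lemma w_step_mono z : w s z <= w s' z.
Proof. by rewrite w'; case: ifP => // _; rewrite leq_addr. Qed.

Lemma Wt_step_mono A : Wt s A <= Wt s' A.
Proof. exact/leq_sum/(fun z _ => w_step_mono z). Qed.

Lemma lift_old_edge v p q : p != v -> q != v -> Gpx p q -> delv Gp' v p q.
Proof. by move=> pv qv e; rewrite /delv pv qv Gp'E e. Qed.

Lemma lift_tree_edge v p q : p != v -> q != v -> te p q -> delv Gp' v p q.
Proof. by move=> pv qv e; rewrite /delv pv qv Gp'E e orbT. Qed.

Lemma connect_tree_S v a b : v \notin S -> a \in S -> b \in S -> connect (delv Gp' v) a b.
Proof.
move=> vS aS bS; rewrite -!mem_l in aS bS.
apply: connect_mono (heap_connect x aS bS) => p q e; rewrite -(tree_edgeE x) in e.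
have [pl ql] := tree_edge_mem e.
by apply: lift_tree_edge => //; apply: contraNneq vS => <-; rewrite -mem_l.
Qed.

Lemma Tcomp_keep v u : x \notin Tcomp s u v -> Tcomp s u v \subset Tcomp s' u v.
Proof.
move=> xT; apply/subsetP => z; rewrite !TcompE !inE => c.
have := connect_restrict c (P := fun z => z \in Tcomp s u v) _.
move/(_ _)/connect_mono; apply; last by move=> z'; rewrite TcompE inE.
move=> p q /= /and3P[hp hq /and3P[pv qv e]]; apply: lift_old_edge => //.
by rewrite /delv e andbT; apply/andP; split; apply: contraNneq xT => <-.
Qed.

(* The component of [G' - v] through [x] loses [x] but gains all of [S],
   which the new tree connects. *)
Lemma Tcomp_cross v u : v \in alive s -> v \notin S -> u \in nbrGp s v ->
  x \in Tcomp s u v ->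
  (forall z, z \in Tcomp s u v -> z != x -> z \in Tcomp s' u v) /\
  (forall y, y \in S -> y \in Tcomp s' u v).
Proof.
move=> hv vS hu; rewrite TcompE inE => cx.
have ux : u != x.
  apply: contraNneq vS => ux; apply: nbrGp_x_S.
  by rewrite nbrGpE // sG -nbrGpE // -ux.
pose P z := (z != x -> connect (delv Gp' v) u z) /\
            (z = x -> forall y, y \in S -> connect (delv Gp' v) u y).
have key z : connect (delv (Gp_rel s) v) u z -> P z.
  apply: connect_ind z.
    by split=> [_|ux']; [exact: connect0|by rewrite ux' eqxx in ux].
  move=> c d _ /and3P[cv dv e] [Pc1 Pc2]; split=> dx.
    case: (eqVneq c x) => [cx'|cx'].
      by apply: Pc2 => //; apply: nbrGp_x_S; rewrite nbrGpE // -cx'.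
    apply: connect_trans (Pc1 cx') (connect1 _).
    by apply: lift_old_edge => //; rewrite /delv cx' dx e.
  have cx' : c != x by apply: contraTneq e => ->; rewrite dx /Gp_rel iH !andbF.
  move=> y hy; apply: connect_trans (Pc1 cx') (connect_tree_S vS _ hy).
  by apply: nbrGp_x_S; rewrite nbrGpE // sG -dx.
split=> [z|y yS]; rewrite !TcompE !inE; last by case: (key _ cx) => _; apply.
by case/key=> P1 _ /P1.
Qed.

Lemma tree_nbr_reach v y : v \in S -> y \in S -> y != v ->
  exists2 t, te v t & connect (delv Gp' v) t y.
Proof.
rewrite -!mem_l => vl yl yv.
have kl : index v l < size l by rewrite index_mem.
have jl : index y l < size l by rewrite index_mem.
have jk : index y l != index v l.
  by apply: contra_neq yv => /(congr1 (nth x l)); rewrite !nth_index.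
have [t ht ct] := heap_nbr_connect x ul kl jl jk.
rewrite !nth_index // in ht ct.
exists t; first by rewrite (tree_edgeE x).
apply: connect_mono ct => p q /and3P[pv qv e].
by apply: lift_tree_edge => //; rewrite (tree_edgeE x).
Qed.

Lemma Tcomp_x_cover v : v \in alive s -> v \in S -> x \in nbrGp s v ->
  forall z, z \in Tcomp s x v -> z != x -> exists2 t, te v t & z \in Tcomp s' t v.
Proof.
move=> hv vS hxv z; rewrite TcompE inE.
pose P z := z != x -> exists2 t, te v t & connect (delv Gp' v) t z.
suff key z' : connect (delv (Gp_rel s) v) x z' -> P z'.
  by move=> c zx; have [t ht ct] := key z c zx; exists t; rewrite // TcompE inE.
apply: connect_ind z'; first by rewrite /P eqxx.
move=> c d _ /and3P[cv dv e] Pc dx.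
case: (eqVneq c x) => [cx|cx].
  apply: tree_nbr_reach dv => //.
  by apply: nbrGp_x_S; rewrite nbrGpE // -cx.
have [t ht ct] := Pc cx; exists t => //.
apply: connect_trans ct (connect1 _).
by apply: lift_old_edge => //; rewrite /delv cx dx e.
Qed.

Lemma Tcomp_side v y t : v \in S -> y \in S -> y != v -> connect (delv Gp' v) t y ->
  Tcomp s y x \subset Tcomp s' t v.
Proof.
move=> vS yS yv ct; apply/subsetP => z; rewrite !TcompE !inE => c.
apply: connect_trans ct _.
have := connect_restrict c (P := fun z => z != v) _.
move/(_ _)/connect_mono; apply.
  by move=> p q /= /and3P[pv qv e]; apply: lift_old_edge.
by move=> z' c'; apply: contraTneq c' => ->; apply: S_apart.
Qed.

Lemma Wt_cross (A : {set T}) : x \in A -> nbrGp s x != set0 -> r \in A ->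
  Wt s A <= \sum_(z in A :\ x) w s' z.
Proof.
move=> xA ne rA.
have rx : r != x by have := S_alive (nbrGp_x_S (hr ne)); rewrite in_setD1 => /andP[].
have rA' : r \in A :\ x by rewrite in_setD1 rx.
rewrite /Wt (big_setD1 x xA) (big_setD1 r rA') (big_setD1 r rA') /=.
have -> : w s' r = w s r + w s x by rewrite w' (negbTE ne) eqxx mul1n.
rewrite addnCA addnA leq_add2l.
exact/leq_sum/(fun z _ => w_step_mono z).
Qed.

Section Survivor.
Variable v : T.
Hypothesis hv' : v \in alive s'.

Let hv : v \in alive s. Proof. by move: hv'; rewrite al' in_setD1 => /andP[]. Qed.
Let vx : v != x. Proof. by move: hv'; rewrite al' in_setD1 => /andP[]. Qed.

Lemma nbrGp_step : nbrGp s' v = (nbrGp s v :\ x) :|: [set t | te v t].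
Proof.
apply/setP => z; rewrite !inE al' H' in_setD1.
case e: (te v z); last by rewrite !orbF andbA.
by rewrite orbT andbT; move/tree_edge_alive: e => /andP[_]; rewrite in_setD1 orbT => ->.
Qed.

Lemma deg_step_notS : v \notin S -> #|nbrG s' v| <= #|nbrG s v|.
Proof.
move=> vS; apply/subset_leq_card/subsetP => z; rewrite !inE al' E' in_setD1.
case/andP=> /andP[_ ->] /orP[->//|/tree_edge_mem[vl _]].
by move: vS; rewrite -mem_l vl.
Qed.

Lemma deg_step_S : v \in S -> #|nbrG s' v| + 1 <= #|nbrG s v| + #|[set t | te v t]|.
Proof.
move=> vS.
have xv : x \in nbrG s v.
  rewrite /nbrG inE hx (E_sym inv).
  move: vS; rewrite /S in_setU; case/orP => [/UN_prop[+ _ _]|]; first by rewrite inE => /andP[].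
  by rewrite nbrGpE // => /and3P[_ _ /(H_sub_E inv)].
have sub : nbrG s' v \subset (nbrG s v :\ x) :|: [set t | te v t].
  apply/subsetP => z; rewrite !inE al' E' in_setD1 => /andP[/andP[zx za] /orP[e|e]].
    by rewrite zx za e.
  by rewrite e orbT.
rewrite (cardsD1 x (nbrG s v)) xv addnC leq_add2l.
exact: leq_trans (subset_leq_card sub) (leq_of_leqif (leq_card_setU _ _)).
Qed.

Lemma nbrGp_notin_S u : v \in S -> u \in nbrGp s v -> u \notin S.
Proof.
move=> vS hu; apply/negP => uS.
have [ux ua] : u != x /\ u \in alive s by move: (S_alive uS); rewrite in_setD1 => /andP[].
have uv : v != u by apply: contraTneq hu => <-; rewrite nbrGpE // /Gp_rel iH !andbF.
move/negP: (S_apart vS uS uv); apply.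
by apply: connect1; rewrite /delv vx ux -nbrGpE.
Qed.

Lemma x_notin_Tcomp u : v \in S -> u \in nbrGp s v -> u != x -> x \notin Tcomp s u v.
Proof.
move=> vS hu ux; rewrite TcompE inE; apply/negP => c.
case: (boolP (x \in nbrGp s v)) => hxv.
  rewrite nbrGpE // in hu; rewrite nbrGpE // in hxv.
  by move: (Gp_acyclic inv hu hxv ux); rewrite c.
have vU : v \in U.
  move: vS; rewrite /S in_setU => /orP[//|]; rewrite nbrGpE // sG -nbrGpE //.
  by move=> h; rewrite h in hxv.
have [_ + _] := UN_prop vU.
have -> : cid s v = cid s u by apply: (cid_Gp inv); rewrite -nbrGpE.
by rewrite (cid_connect (connect_delv c)) eqxx.
Qed.

Lemma Wt_Tcomp_step_notS u : v \notin S -> u \in nbrGp s v ->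
  Wt s (Tcomp s u v) <= Wt s' (Tcomp s' u v).
Proof.
move=> vS hu.
case: (boolP (x \in Tcomp s u v)) => xin; last first.
  exact/(leq_trans (Wt_step_mono _))/leq_sum_subset/Tcomp_keep.
have [Tx TS] := Tcomp_cross hv vS hu xin.
have ux : u != x.
  by apply: contraNneq vS => ux; apply: nbrGp_x_S; rewrite nbrGpE // sG -nbrGpE // -ux.
have cux : connect (delv (Gp_rel s) v) u x by move: xin; rewrite TcompE inE.
have [c /and3P[_ _ ecx]] := connect_last_edge cux ux.
have ne : nbrGp s x != set0 by apply/set0Pn; exists c; rewrite nbrGpE // sG.
have rT : r \in Tcomp s u v.
  rewrite TcompE inE; apply: connect_trans cux (connect1 _).
  rewrite /delv (eq_sym x v) vx -nbrGpE // hr // andbT.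
  by apply: contraNneq vS => <-; apply/nbrGp_x_S/hr.
apply: leq_trans (Wt_cross xin ne rT) _; apply/leq_sum_subset/subsetP => z.
by rewrite in_setD1 => /andP[zx zT]; apply: Tx.
Qed.

Lemma rem_step_notS : v \notin S -> rem_dash s v <= rem_dash s' v.
Proof.
move=> vS.
have xN : x \notin nbrGp s v.
  by apply: contraNN vS => h; apply: nbrGp_x_S; rewrite nbrGpE // sG -nbrGpE.
rewrite !rem_dashE; have -> : nbrGp s' v = nbrGp s v.
  rewrite nbrGp_step; apply/setP => z; rewrite !inE.
  case e: (te v z); first by have [vl _] := tree_edge_mem e; rewrite -mem_l vl in vS.
  rewrite orbF; case: eqP => // ->; move: xN; rewrite /nbrGp inE => /negbTE ->.
  by rewrite andbF.
apply: (rem_of_mono (psi := id) (d := fun _ => 0)).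
  move=> u hu; rewrite addn0; apply: leq_trans (Wt_Tcomp_step_notS vS hu) _.
  by rewrite (bigD1 u) //= ?hu ?eqxx // leq_addr.
by rewrite big1 // addn0 w_step_mono.
Qed.

Lemma Wt_Tcomp_step_keep u : v \in S -> u \in nbrGp s v -> u != x ->
  Wt s (Tcomp s u v) <= Wt s' (Tcomp s' u v).
Proof.
move=> vS hu ux; apply: leq_trans (Wt_step_mono _) _.
exact/leq_sum_subset/Tcomp_keep/x_notin_Tcomp.
Qed.

Lemma Wt_Tcomp_x_step : v \in S -> x \in nbrGp s v ->
  Wt s (Tcomp s x v) <=
  \sum_(t in [set t | te v t]) Wt s' (Tcomp s' t v) + (r == v) * w s x.
Proof.
move=> vS xv.
have ne : nbrGp s x != set0.
  by apply/set0Pn; exists v; move: xv; rewrite !nbrGpE // sG.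
have cover : \sum_(z in Tcomp s x v :\ x) w s' z <=
    \sum_(t in [set t | te v t]) Wt s' (Tcomp s' t v).
  apply: leq_sum_cover => z; rewrite in_setD1 => /andP[zx zT].
  by have [t ht zt] := Tcomp_x_cover hv vS xv zT zx; exists t; first rewrite inE.
case: (eqVneq r v) => [rv|rv].
  rewrite {1}/Wt (big_setD1 x (mem_Tcomp s x v)) /= mul1n addnC leq_add2r.
  by apply: leq_trans cover; apply/leq_sum/(fun z _ => w_step_mono z).
rewrite mul0n addn0; apply: leq_trans cover; apply: Wt_cross => //; first exact: mem_Tcomp.
rewrite TcompE inE; apply: connect1; rewrite /delv (eq_sym x v) vx rv -nbrGpE //.
exact: hr.
Qed.

Lemma rem_step_S : v \in S -> rem_dash s v <= rem_dash s' v.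
Proof.
move=> vS; set N0 := nbrGp s v.
rewrite !rem_dashE.
apply: (rem_of_mono (psi := fun t => if t \in N0 then t else x)
                    (d := fun u => if u == x then (r == v) * w s x else 0)).
  move=> u hu; case: (eqVneq u x) => [?|ux].
    subst u; apply: leq_trans (Wt_Tcomp_x_step vS hu) _; rewrite leq_add2r.
    apply: leq_sum_sub => t; rewrite inE => ht.
    have tN0 : t \notin N0 by apply/negP => /(nbrGp_notin_S vS); rewrite (tree_edge_S ht).
    by rewrite nbrGp_step in_setU inE ht orbT (negbTE tN0) eqxx.
  rewrite addn0; apply: leq_trans (Wt_Tcomp_step_keep vS hu ux) _.
  by rewrite (bigD1 u) //= ?nbrGp_step ?in_setU ?in_setD1 ?ux ?hu ?eqxx // leq_addr.
case: (boolP (x \in N0)) => xN0.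
  rewrite (big_setD1 x xN0) /= eqxx big1 ?addn0; last first.
    by move=> u; rewrite in_setD1 => /andP[/negbTE -> _].
  have ne : nbrGp s x != set0.
    by apply/set0Pn; exists v; move: xN0; rewrite /N0 !nbrGpE // sG.
  by rewrite w' (negbTE ne) eq_sym.
rewrite big1 ?addn0 ?w_step_mono // => u hu; case: eqP => // ux.
by rewrite -ux hu in xN0.
Qed.

(* If [v] has two tree neighbours [t1], [t2] then [rem'(v)] collects the weights
   of the new components at [t1] and at [t2], each containing the old component
   of a node [y_i] of [S] placed after [v] in [l] (hence with larger [delta]),
   which bounds [rem(y_i)]; the old [rem(v)] is bounded by the rest. *)
Lemma rem_step_branching : v \in S -> branching l (index v l) ->
  exists y1 y2, [/\ y1 \in alive s, y2 \in alive s,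
     (delta G0 s v <= delta G0 s y1)%R, (delta G0 s v <= delta G0 s y2)%R &
     2 * minn (minn (rem_dash s y1) (rem_dash s y2)) (rem_dash s v) <= rem_dash s' v].
Proof.
move=> vS br.
have kl : index v l < size l by rewrite index_mem mem_l.
have ev : L (index v l) = v by rewrite nth_index // mem_l.
have [t1 [t2 [j1 [j2 [[t12 h1 h2 c1 c2] [kj1 j1l kj2 j2l]]]]]] := heap_two_nbrs x ul kl br.
rewrite ev -!(tree_edgeE x) in h1 h2 c1 c2.
have lift a b : connect (delv (heap_edge x l (size l).-1) v) a b -> connect (delv Gp' v) a b.
  apply: connect_mono => p q /and3P[pv qv e].
  by apply: lift_tree_edge => //; rewrite (tree_edgeE x).
have yS j : j < size l -> L j \in S by move=> jl; rewrite -mem_l mem_nth.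
have ya j : j < size l -> (L j \in alive s) /\ (L j != x).
  by move=> jl; have := S_alive (yS j jl); rewrite in_setD1 => /andP[].
have rem_y j t : j < size l -> index v l < j -> connect (delv Gp' v) t (L j) ->
    rem_dash s (L j) <= Wt s' (Tcomp s' t v).
  move=> jl kj ct; have [ya1 ya2] := ya j jl.
  apply: leq_trans (rem_le_Wt_Tcomp inv ya1 ya2) _.
  apply/(leq_trans (Wt_step_mono _))/leq_sum_subset/(Tcomp_side vS (yS j jl) _ ct).
  by rewrite -ev nth_uniq // neq_ltn kj orbT.
have delta_y j : j < size l -> index v l < j -> (delta G0 s v <= delta G0 s (L j))%R.
  have tr : transitive (fun a b => (delta G0 s a <= delta G0 s b)%R).
    by move=> ? ? ?; apply: le_trans.
  by move=> jl kj; rewrite -{1}ev; apply: (sorted_ltn_nth tr x sl).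
exists (L j1), (L j2); split; [by case: (ya j1 j1l)|by case: (ya j2 j2l)|exact: delta_y..|].
set a := minn (minn (rem_dash s (L j1)) (rem_dash s (L j2))) (rem_dash s v).
have N1 t : te v t -> t \in nbrGp s' v by move=> vt; rewrite nbrGp_step in_setU inE vt orbT.
have a3 : a <= w s' v + \sum_(t in nbrGp s' v :\ t1 :\ t2) Wt s' (Tcomp s' t v).
  apply: leq_trans (geq_minr _ _) _; rewrite rem_dashE /rem_of addnC.
  apply: leq_add; first exact: w_step_mono.
  apply: leq_trans (leq_sum_sub_max _ _ x) _.
  apply: leq_trans (_ : \sum_(u in nbrGp s v :\ x) Wt s' (Tcomp s' u v) <= _).
    by apply: leq_sum => u; rewrite in_setD1 => /andP[ux hu]; apply: Wt_Tcomp_step_keep.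
  apply/leq_sum_subset/subsetP => u; rewrite in_setD1 => /andP[ux hu].
  have uS := nbrGp_notin_S vS hu.
  rewrite !in_setD1 nbrGp_step in_setU in_setD1 ux hu /= andbT.
  by apply/andP; split; apply: contraNneq uS => ->; [apply: tree_edge_S h2|apply: tree_edge_S h1].
have a1 : a <= Wt s' (Tcomp s' t1 v).
  by apply: leq_trans (rem_y _ _ j1l kj1 (lift _ _ c1)); rewrite /a !geq_min leqnn.
have a2 : a <= Wt s' (Tcomp s' t2 v).
  by apply: leq_trans (rem_y _ _ j2l kj2 (lift _ _ c2)); rewrite /a !geq_min leqnn ?orbT.
by rewrite mul2n -addnn rem_dashE; apply: double_le_rem_of (N1 _ h1) (N1 _ h2) t12 a1 a2 a3.
Qed.

Lemma dash_step_cases :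
  ((delta G0 s' v <= delta G0 s v)%R /\ rem_dash s v <= rem_dash s' v) \/
  exists y1 y2, [/\ y1 \in alive s, y2 \in alive s,
     (delta G0 s v <= delta G0 s y1)%R, (delta G0 s v <= delta G0 s y2)%R &
     (delta G0 s' v <= delta G0 s v + 2)%R /\
     2 * minn (minn (rem_dash s y1) (rem_dash s y2)) (rem_dash s v) <= rem_dash s' v].
Proof.
case: (boolP (v \in S)) => vS; last first.
  left; split; last exact: rem_step_notS.
  by rewrite /delta lerD2r lez_nat deg_step_notS.
have kl : index v l < size l by rewrite index_mem mem_l.
have deg := deg_step_S vS.
have tnbrs : [set t | te v t] = [set t | heap_edge x l (size l).-1 (L (index v l)) t].
  by apply/setP => t; rewrite !inE nth_index ?mem_l // (tree_edgeE x).
case: (boolP (branching l (index v l))) => br.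
  have := heap_deg_le3 x ul kl; rewrite -tnbrs => d3.
  have [y1 [y2 [a1 a2 d1 d2 rr]]] := rem_step_branching vS br.
  right; exists y1, y2; split => //; split => //.
  rewrite /delta addrAC lerD2r -PoszD lez_nat -(leq_add2r 1) (leq_trans deg) //.
  by rewrite -addnA leq_add2l.
have := heap_deg_le1 x ul kl br; rewrite -tnbrs => d1.
left; split; last exact: rem_step_S.
by rewrite /delta lerD2r lez_nat -(leq_add2r 1) (leq_trans deg) // leq_add2l.
Qed.

End Survivor.

End Step.

Section Reachable.
Variables (R : realType) (T : finType) (G0 : rel T) (id0 : T -> R).
Hypothesis G0_sym : symmetric G0.
Local Open Scope ring_scope.

Definition pow2half (d : int) : R := powR 2 (d%:~R / 2).

Lemma pow2half_le (a b : int) : a <= b -> pow2half a <= pow2half b.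
Proof.
move=> ab; apply: ler_powR; first by rewrite ler1n.
by rewrite ler_pM2r ?invr_gt0 ?ltr0n // ler_int.
Qed.

Lemma pow2halfD2 (a : int) : pow2half (a + 2) = 2 * pow2half a.
Proof.
rewrite /pow2half intrD mulrDl divff ?pnatr_eq0 //.
by rewrite powRD ?pnatr_eq0 ?implybT // powRr1 ?ler0n // mulrC.
Qed.

Lemma ler_natr_minn (c : R) (a b : nat) : c <= a%:R -> c <= b%:R -> c <= (minn a b)%:R.
Proof. by case: leqP. Qed.

Lemma dash_inv_init : dash_inv (init_state G0 id0).
Proof. by split=> // [a b|v u1 u2]; rewrite /Gp_rel /= !andbF. Qed.

Lemma pow2half_delta_init v :
  pow2half (delta G0 (init_state G0 id0) v) <= (rem_dash (init_state G0 id0) v)%:R.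
Proof.
have -> : delta G0 (init_state G0 id0) v = 0.
  rewrite /delta /nbrG /= (_ : [set x in [set: T] | G0 v x] = [set x | G0 v x]) ?subrr //.
  by apply/setP => z; rewrite !inE.
rewrite rem_dashE /rem_of.
have -> : nbrGp (init_state G0 id0) v = set0 by apply/setP => z; rewrite !inE andbF.
by rewrite !big_set0 /pow2half mul0r powRr0.
Qed.

Lemma reachable_inv s : reachable G0 id0 s -> dash_inv s /\
  (forall v, v \in alive s -> pow2half (delta G0 s v) <= (rem_dash s v)%:R).
Proof.
elim=> [|s0 x s1 _ [inv good]].
  by split=> [|v _]; [exact: dash_inv_init|exact: pow2half_delta_init].
move=> [hx [U [l [r [m [[hU [ul lS] sl hr _] [al' E' H' cid' w']]]]]]].
split=> [|v hv']; first exact: (dash_inv_step inv hx hU ul lS al' E' H' cid').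
have hv : v \in alive s0 by move: hv'; rewrite al' in_setD1 => /andP[].
have good_above y : y \in alive s0 -> delta G0 s0 v <= delta G0 s0 y ->
    pow2half (delta G0 s0 v) <= (rem_dash s0 y)%:R.
  by move=> hy dvy; apply: le_trans (good y hy); apply: pow2half_le.
case: (dash_step_cases inv hx hU ul lS sl hr al' E' H' w' hv')
  => [[d1 r1]|[y1 [y2 [a1 a2 d1 d2 [d3 r3]]]]].
  by apply: le_trans (pow2half_le d1) (le_trans (good v hv) _); rewrite ler_nat.
apply: le_trans (pow2half_le d3) _; rewrite pow2halfD2.
apply: le_trans (_ : 2 * (minn (minn (rem_dash s0 y1) (rem_dash s0 y2)) (rem_dash s0 v))%:R <= _).
  by rewrite ler_pM2l ?ltr0n // !ler_natr_minn ?good ?good_above.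
by rewrite -natrM ler_nat.
Qed.

End Reachable.

Theorem lemma4 (R : realType) (T : finType) (G0 : rel T) (id0 : T -> R)
  (G0_sym : symmetric G0) (G0_irr : irreflexive G0)
  (G0_conn : forall x y : T, connect G0 x y)
  (id0_range : forall x : T, (0 <= id0 x <= 1)%R)
  (s : state R T) (v : T) :
  reachable G0 id0 s -> v \in alive s ->
  (powR (2 : R) ((delta G0 s v)%:~R / 2) <= (rem_dash s v)%:R)%R.
Proof. by move=> /(reachable_inv G0_sym)[_]; apply. Qed.
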